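(* Let $U$ be a finite set of men and $W_1\subseteq W_2$ finite sets of women with $|W_1|\le|W_2|=|U|$, each man having a strict total order over $W_2$ and each woman a strict total order over $U$. Let $M_1,M_1'$ be stable matchings of $(U,W_1)$ such that $M_1'$ men-dominates $M_1$, and let $M_2$ be a stable matching of $(U,W_2)$. Define $M_2'$ as the union of: the pairs of $M_1'\cap M_2$; for each path component of $G(M_1',M_2)$, its edges belonging to $M_2$; for each cycle of $G(M_1',M_2)$ of Type I, its edges belonging to $M_2$; for each cycle of $G(M_1',M_2)$ of Type II, its edges belonging to $M_1'$. Then $|M_1'\setminus M_2'|\le |M_1\setminus M_2|$.
   Context: A matching is a set of man–woman pairs with each person in at most one pair; a blocking pair of $M$ is a pair $(u,w)\notin M$ with ($u$ unmatched or preferring $w$ to his partner) and ($w$ unmatched or preferring $u$ to her partner); a matching is stable if it has no blocking pair. Preferences in a sub-instance are restrictions of the given ones. $M$ men-dominates $M'$ if every man's partner in $M$ is at least as good for him as his partner in $M'$. The difference graph $G(M,M')$ has vertex set $U\cup W_2$ and edge set $M\triangle M'$. A cycle $C$ of $G(M_1',M_2)$ is of Type I if every man in $C$ strictly prefers his partner in $M_2$ to his partner in $M_1'$ and every woman in $C$ strictly prefers her partner in $M_1'$ to her partner in $M_2$; it is of Type II if every man in $C$ strictly prefers his partner in $M_1'$ to his partner in $M_2$ and every woman in $C$ strictly prefers her partner in $M_2$ to her partner in $M_1'$ (every cycle is of one of these types). *)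

From mathcomp Require Import all_boot.
Set Implicit Arguments. Unset Strict Implicit. Unset Printing Implicit Defensive.

Section Marriage.
Variables (Man Woman : finType).
(* Preferences as rank functions: smaller rank = more preferred.
   Injectivity of each rank function makes the induced order strict total. *)
Variable prefM : Man -> Woman -> nat.
Variable prefW : Woman -> Man -> nat.

Definition strict_prefs : Prop :=
  (forall u, injective (prefM u)) /\ (forall w, injective (prefW w)).

Definition mprefers u w w' := prefM u w < prefM u w'.
Definition wprefers w u u' := prefW w u < prefW w u'.

Implicit Types (M : {set Man * Woman}) (W : {set Woman}).

Definition is_matching M : Prop :=
  (forall u w w', (u, w) \in M -> (u, w') \in M -> w = w') /\
  (forall u u' w, (u, w) \in M -> (u', w) \in M -> u = u').

Definition matching_of W M : Prop :=
  is_matching M /\ (forall p, p \in M -> p.2 \in W).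

Definition blocking M u w : Prop :=
  (u, w) \notin M /\
  ((~ exists w', (u, w') \in M) \/ (exists w', (u, w') \in M /\ mprefers u w w')) /\
  ((~ exists u', (u', w) \in M) \/ (exists u', (u', w) \in M /\ wprefers w u u')).

Definition stable_of W M : Prop :=
  matching_of W M /\ (forall u w, w \in W -> ~ blocking M u w).

Definition men_dominates M M' : Prop :=
  forall u w', (u, w') \in M' -> exists2 w, (u, w) \in M & prefM u w <= prefM u w'.

Definition symdiff M M' := (M :\: M') :|: (M' :\: M).

Definition diff_edge M M' : rel (Man + Woman) := fun x y =>
  match x, y with
  | inl u, inr w => (u, w) \in symdiff M M'
  | inr w, inl u => (u, w) \in symdiff M M'
  | _, _ => false
  end.

Definition degree M M' (x : Man + Woman) := #|[set y | diff_edge M M' x y]|.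

Definition is_cycle_comp M M' (x : Man + Woman) : bool :=
  [forall y, connect (diff_edge M M') x y ==> (degree M M' y == 2)].

Definition typeI M1' M2 (x : Man + Woman) : bool :=
  [forall u, connect (diff_edge M1' M2) x (inl u) ==>
     [forall w1, forall w2, ((u, w1) \in M1') && ((u, w2) \in M2) ==>
        mprefers u w2 w1]] &&
  [forall w, connect (diff_edge M1' M2) x (inr w) ==>
     [forall u1, forall u2, ((u1, w) \in M1') && ((u2, w) \in M2) ==>
        wprefers w u1 u2]].

Definition typeII M1' M2 (x : Man + Woman) : bool :=
  [forall u, connect (diff_edge M1' M2) x (inl u) ==>
     [forall w1, forall w2, ((u, w1) \in M1') && ((u, w2) \in M2) ==>
        mprefers u w1 w2]] &&
  [forall w, connect (diff_edge M1' M2) x (inr w) ==>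
     [forall u1, forall u2, ((u1, w) \in M1') && ((u2, w) \in M2) ==>
        wprefers w u2 u1]].

(* M2' built from M1' and M2; the component of edge (u,w) is that of inl u *)
Definition M2' M1' M2 : {set Man * Woman} :=
  [set p | [|| (p \in M1') && (p \in M2),
              (p \in M2 :\: M1') && ~~ is_cycle_comp M1' M2 (inl p.1),
              [&& p \in M2 :\: M1', is_cycle_comp M1' M2 (inl p.1) & typeI M1' M2 (inl p.1)]
            | [&& p \in M1' :\: M2, is_cycle_comp M1' M2 (inl p.1) & typeII M1' M2 (inl p.1)]]].

End Marriage.

From mathcomp Require Import all_boot.
From Stdlib Require Import Classical.
Set Implicit Arguments. Unset Strict Implicit. Unset Printing Implicit Defensive.

(* Call a man of type II if he strictly prefers his M1'-partner to his
   M2-partner, and a woman of type II if she strictly prefers her M2-partner to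
   her M1'-partner.  By stability of M2, the M1'-partner of a type II man is a
   type II woman; by stability of M1', the M2-partner of a type II woman is a
   type II man.  Both maps are injective, hence bijective, so the type II
   vertices are closed in G(M1', M2), have degree 2 and form Type II cycles,
   whose M1'-edges are kept in M2'.  Since |W2| = |U|, M2 is perfect, so every
   man u of an edge (u, w) of M1' minus M2' strictly prefers his M2-partner to w.
   As M1' men-dominates M1 (and both are stable, so they match the same men),
   u has an M1-partner no better than w, hence not his M2-partner: the map
   (u, w) |-> u injects M1' minus M2' into the men of M1 minus M2. *)

Section Matchings.
Variables (Man Woman : finType).
Implicit Types (M E : {set Man * Woman}).

Lemma card_matching_fst M E : is_matching M -> E \subset M ->
  #|[set p.1 | p in E]| = #|E|.
Proof.
move=> [mu _] /subsetP sEM; apply: card_in_imset => -[u w] [u' w'] /sEM h /sEM h' /= eu.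
by subst u'; rewrite (mu _ _ _ h h').
Qed.

Lemma card_matching_snd M E : is_matching M -> E \subset M ->
  #|[set p.2 | p in E]| = #|E|.
Proof.
move=> [_ mw] /subsetP sEM; apply: card_in_imset => -[u w] [u' w'] /sEM h /sEM h' /= ew.
by subst w'; rewrite (mw _ _ _ h h').
Qed.

Lemma degree_man M M' u w w' : is_matching M -> is_matching M' ->
  (u, w) \in M -> (u, w') \in M' -> w != w' -> degree M M' (inl u) = 2.
Proof.
move=> [mu _] [mu' _] hw hw' nww'.
have nw : (u, w) \notin M'.
  by apply: contra nww' => h; rewrite (mu' _ _ _ h hw').
have nw' : (u, w') \notin M.
  by apply: contra nww' => h; rewrite (mu _ _ _ hw h).
rewrite /degree.
have -> : [set y | diff_edge M M' (inl u) y] = [set inr w; inr w'].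
  apply/setP => -[u'|v]; rewrite !inE //= /symdiff !inE.
  apply/idP/idP => [/orP[]/andP[_ h]|/orP[]/eqP[->]]; rewrite ?hw ?hw' ?nw ?nw' ?orbT //.
    by rewrite (mu _ _ _ h hw) eqxx.
  by rewrite (mu' _ _ _ h hw') eqxx orbT.
by rewrite cards2 (inj_eq (@inr_inj _ _)) nww'.
Qed.

Lemma degree_woman M M' u u' w : is_matching M -> is_matching M' ->
  (u, w) \in M -> (u', w) \in M' -> u != u' -> degree M M' (inr w) = 2.
Proof.
move=> [_ mw] [_ mw'] hu hu' nuu'.
have nu : (u, w) \notin M'.
  by apply: contra nuu' => h; rewrite (mw' _ _ _ h hu').
have nu' : (u', w) \notin M.
  by apply: contra nuu' => h; rewrite (mw _ _ _ hu h).
rewrite /degree.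
have -> : [set y | diff_edge M M' (inr w) y] = [set inl u; inl u'].
  apply/setP => -[v|w']; rewrite !inE //= /symdiff !inE.
  apply/idP/idP => [/orP[]/andP[_ h]|/orP[]/eqP[->]]; rewrite ?hu ?hu' ?nu ?nu' ?orbT //.
    by rewrite (mw _ _ _ h hu) eqxx.
  by rewrite (mw' _ _ _ h hu') eqxx orbT.
by rewrite cards2 (inj_eq (@inl_inj _ _)) nuu'.
Qed.

End Matchings.

Section Stability.
Variables (Man Woman : finType).
Variables (prefM : Man -> Woman -> nat) (prefW : Woman -> Man -> nat).
Hypothesis strict : strict_prefs prefM prefW.
Implicit Types (M : {set Man * Woman}) (W : {set Woman}).

Lemma ltn_prefM u w w' : w != w' -> prefM u w <= prefM u w' -> prefM u w < prefM u w'.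
Proof. by move=> nww'; rewrite ltn_neqAle => ->; rewrite andbT (inj_eq (strict.1 u)). Qed.

Lemma ltn_prefW w u u' : u != u' -> prefW w u <= prefW w u' -> prefW w u < prefW w u'.
Proof. by move=> nuu'; rewrite ltn_neqAle => ->; rewrite andbT (inj_eq (strict.2 w)). Qed.

Lemma stable_unblocked W M u w : stable_of prefM prefW W M -> w \in W -> (u, w) \notin M ->
  (exists2 w', (u, w') \in M & prefM u w' <= prefM u w) \/
  (exists2 u', (u', w) \in M & prefW w u' <= prefW w u).
Proof.
move=> [_ stM] wW nuw; apply: NNPP => /not_or_and[nw nu]; apply: (stM u w wW).
split; [done | split].
- have [[w' uw']|] := classic (exists w', (u, w') \in M); last by left.
  by right; exists w'; split; rewrite // /mprefers ltnNge; apply/negP => le; apply: nw; exists w'.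
- have [[u' u'w]|] := classic (exists u', (u', w) \in M); last by left.
  by right; exists u'; split; rewrite // /wprefers ltnNge; apply/negP => le; apply: nu; exists u'.
Qed.

Lemma stable_perfect M : #|Woman| = #|Man| -> stable_of prefM prefW setT M ->
  forall u, exists w, (u, w) \in M.
Proof.
move=> card_eq stM u; apply: NNPP => unmatched_u; have mM := stM.1.1.
have lt_M_men : #|M| < #|Man|.
  rewrite -(card_matching_fst mM (subxx M)) -cardsT; apply: proper_card.
  rewrite properT; apply/negP => /eqP menT.
  have /imsetP[[u' w] uw /= eu] : u \in [set p.1 | p in M] by rewrite menT.
  by apply: unmatched_u; exists w; rewrite eu.
have /properP[_ [w _ wfree]] : [set p.2 | p in M] \proper [set: Woman].
  rewrite properT; apply: contraTneq lt_M_men => womT.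
  by rewrite -(card_matching_snd mM (subxx M)) womT cardsT card_eq ltnn.
have nuw : (u, w) \notin M by apply/negP => uw; apply: unmatched_u; exists w.
have [[w' uw' _]|[u' u'w _]] := stable_unblocked stM (in_setT w) nuw.
- by apply: unmatched_u; exists w'.
- by move/imsetP: wfree; apply; exists (u', w).
Qed.

Lemma men_dominates_matched W M M' :
  stable_of prefM prefW W M -> stable_of prefM prefW W M' -> men_dominates prefM M' M ->
  forall u w, (u, w) \in M' -> exists w0, (u, w0) \in M.
Proof.
move=> stM stM' dom; have mM := stM.1.1; have mM' := stM'.1.1.
have menMM' : [set p.1 | p in M] \subset [set p.1 | p in M'].
  apply/subsetP => _ /imsetP[[u w] uw ->].
  by have [w' uw' _] := dom u w uw; apply/imsetP; exists (u, w').
have womM'M : [set p.2 | p in M'] \subset [set p.2 | p in M].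
  apply/subsetP => _ /imsetP[[u w] uw ->] /=; apply/imsetP; apply: NNPP => wfree.
  have nuw : (u, w) \notin M by apply/negP => uwM; apply: wfree; exists (u, w).
  have [[w0 uw0 le]|[u' u'w _]] := stable_unblocked stM (stM'.1.2 _ uw) nuw.
  - have [w' uw' le'] := dom u w0 uw0; rewrite (mM'.1 _ _ _ uw' uw) in le'.
    have nw0w : w0 != w by apply: contraNneq nuw => <-.
    by move: (ltn_prefM nw0w le); rewrite ltnNge le'.
  - by apply: wfree; exists (u', w).
have menE : [set p.1 | p in M] = [set p.1 | p in M'].
  apply/eqP; rewrite eqEcard menMM' (card_matching_fst mM (subxx M)).
  rewrite (card_matching_fst mM' (subxx M')) -(card_matching_snd mM (subxx M)).
  by rewrite -(card_matching_snd mM' (subxx M')) subset_leq_card.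
move=> u w uw; have : u \in [set p.1 | p in M] by rewrite menE; apply/imsetP; exists (u, w).
by case/imsetP => -[u' w0] uw0 /= ->; exists w0.
Qed.

Section TypeII.
Variables (W1 : {set Woman}) (M1' M2 : {set Man * Woman}).
Hypothesis stM1' : stable_of prefM prefW W1 M1'.
Hypothesis stM2 : stable_of prefM prefW setT M2.

(* These turn out to be exactly the vertices of the Type II cycles of G(M1', M2). *)
Definition menII := [set u | [exists w1, exists w2,
  [&& (u, w1) \in M1', (u, w2) \in M2 & prefM u w1 < prefM u w2]]].
Definition womenII := [set w | [exists u1, exists u2,
  [&& (u1, w) \in M1', (u2, w) \in M2 & prefW w u2 < prefW w u1]]].

Lemma menIIP u : reflect (exists w1 w2,
  [/\ (u, w1) \in M1', (u, w2) \in M2 & prefM u w1 < prefM u w2]) (u \in menII).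
Proof.
rewrite inE; apply: (iffP existsP) => [[w1 /existsP[w2 /and3P[]]]|[w1 [w2 []]]].
  by exists w1, w2.
by move=> *; exists w1; apply/existsP; exists w2; apply/and3P.
Qed.

Lemma womenIIP w : reflect (exists u1 u2,
  [/\ (u1, w) \in M1', (u2, w) \in M2 & prefW w u2 < prefW w u1]) (w \in womenII).
Proof.
rewrite inE; apply: (iffP existsP) => [[u1 /existsP[u2 /and3P[]]]|[u1 [u2 []]]].
  by exists u1, u2.
by move=> *; exists u1; apply/existsP; exists u2; apply/and3P.
Qed.

Lemma M1'_partner_womenII u w1 w2 : (u, w1) \in M1' -> (u, w2) \in M2 ->
  prefM u w1 < prefM u w2 -> w1 \in womenII.
Proof.
move=> uw1 uw2 lt12; have mM2 := stM2.1.1.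
have nuw1 : (u, w1) \notin M2.
  by apply/negP => uw1M2; rewrite (mM2.1 _ _ _ uw1M2 uw2) ltnn in lt12.
have [[w' uw' le]|[u' u'w1 le]] := stable_unblocked stM2 (in_setT w1) nuw1.
  by rewrite (mM2.1 _ _ _ uw' uw2) leqNgt lt12 in le.
have nu'u : u' != u by apply: contraNneq nuw1 => <-.
by apply/womenIIP; exists u, u'; split; rewrite // ltn_prefW.
Qed.

Lemma M2_partner_menII w u1 u2 : (u1, w) \in M1' -> (u2, w) \in M2 ->
  prefW w u2 < prefW w u1 -> u2 \in menII.
Proof.
move=> u1w u2w lt21; have mM1' := stM1'.1.1.
have nu2w : (u2, w) \notin M1'.
  by apply/negP => u2wM1'; rewrite (mM1'.2 _ _ _ u2wM1' u1w) ltnn in lt21.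
have [[w' u2w' le]|[u' u'w le]] := stable_unblocked stM1' (stM1'.1.2 _ u1w) nu2w.
  have nw'w : w' != w by apply: contraNneq nu2w => <-.
  by apply/menIIP; exists w', w; split; rewrite // ltn_prefM.
by rewrite (mM1'.2 _ _ _ u'w u1w) leqNgt lt21 in le.
Qed.

(* M1' maps menII into womenII and M2 maps womenII into menII, injectively;
   hence both maps are onto. *)
Lemma typeII_partners :
  (forall u, u \in menII -> exists2 w, (u, w) \in M2 & w \in womenII) /\
  (forall w, w \in womenII -> exists2 u, (u, w) \in M1' & u \in menII).
Proof.
have mM1' := stM1'.1.1; have mM2 := stM2.1.1.
set E1 := [set p in M1' | p.1 \in menII]; set E2 := [set p in M2 | p.2 \in womenII].
have sE1 : E1 \subset M1' by apply/subsetP => p /setIdP[].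
have sE2 : E2 \subset M2 by apply/subsetP => p /setIdP[].
have men_E1 : menII \subset [set p.1 | p in E1].
  apply/subsetP => u uII; have /menIIP[w1 [w2 [uw1 _ _]]] := uII.
  by apply/imsetP; exists (u, w1) => //; rewrite inE uw1.
have E1_women : [set p.2 | p in E1] \subset womenII.
  apply/subsetP => _ /imsetP[[u w] /setIdP[uw /menIIP[w1 [w2 [uw1 uw2 lt]]]] ->] /=.
  by rewrite (mM1'.1 _ _ _ uw uw1); apply: M1'_partner_womenII lt.
have women_E2 : womenII \subset [set p.2 | p in E2].
  apply/subsetP => w wII; have /womenIIP[u1 [u2 [_ u2w _]]] := wII.
  by apply/imsetP; exists (u2, w) => //; rewrite inE u2w.
have E2_men : [set p.1 | p in E2] \subset menII.
  apply/subsetP => _ /imsetP[[u w] /setIdP[uw /womenIIP[u1 [u2 [u1w u2w lt]]]] ->] /=.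
  by rewrite (mM2.2 _ _ _ uw u2w); apply: M2_partner_menII lt.
have le_men_E1 := subset_leq_card men_E1; have le_E1_women := subset_leq_card E1_women.
have le_women_E2 := subset_leq_card women_E2; have le_E2_men := subset_leq_card E2_men.
rewrite (card_matching_fst mM1' sE1) in le_men_E1.
rewrite (card_matching_snd mM1' sE1) in le_E1_women.
rewrite (card_matching_snd mM2 sE2) in le_women_E2.
rewrite (card_matching_fst mM2 sE2) in le_E2_men.
have E2_menE : [set p.1 | p in E2] = menII.
  apply/eqP; rewrite eqEcard E2_men (card_matching_fst mM2 sE2).
  exact: leq_trans le_men_E1 (leq_trans le_E1_women le_women_E2).
have E1_womenE : [set p.2 | p in E1] = womenII.
  apply/eqP; rewrite eqEcard E1_women (card_matching_snd mM1' sE1).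
  exact: leq_trans le_women_E2 (leq_trans le_E2_men le_men_E1).
split.
  by move=> u; rewrite -E2_menE => /imsetP[[u' w] /setIdP[uw wII] ->]; exists w.
by move=> w; rewrite -E1_womenE => /imsetP[[u w'] /setIdP[uw uII] ->]; exists u.
Qed.

Definition typeII_vertex (x : Man + Woman) : bool :=
  match x with inl u => u \in menII | inr w => w \in womenII end.

Lemma diff_edge_typeII x y : diff_edge M1' M2 x y -> typeII_vertex x -> typeII_vertex y.
Proof.
have mM1' := stM1'.1.1; have mM2 := stM2.1.1.
case: x => [u|w]; case: y => [u'|w'] //= /setUP[]/setDP[e _].
- case/menIIP => w1 [w2 [uw1 uw2 lt]].
  by rewrite (mM1'.1 _ _ _ e uw1); apply: M1'_partner_womenII lt.
- by move=> /typeII_partners.1[w2 uw2]; rewrite (mM2.1 _ _ _ e uw2).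
- by move=> /typeII_partners.2[u1 u1w]; rewrite (mM1'.2 _ _ _ e u1w).
- case/womenIIP => u1 [u2 [u1w u2w lt]].
  by rewrite (mM2.2 _ _ _ e u2w); apply: M2_partner_menII lt.
Qed.

Lemma connect_typeII x y :
  connect (diff_edge M1' M2) x y -> typeII_vertex x -> typeII_vertex y.
Proof.
case/connectP => p + ->; elim: p x => [|z p IHp] x //= /andP[exz pz] xII.
exact: IHp _ pz (diff_edge_typeII exz xII).
Qed.

Lemma degree_typeII x : typeII_vertex x -> degree M1' M2 x = 2.
Proof.
have mM1' := stM1'.1.1; have mM2 := stM2.1.1.
case: x => [u /menIIP[w1 [w2 [uw1 uw2 lt]]]|w /womenIIP[u1 [u2 [u1w u2w lt]]]].
  by apply: degree_man uw1 uw2 _ => //; apply: contraTneq lt => ->; rewrite ltnn.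
by apply: degree_woman u1w u2w _ => //; apply: contraTneq lt => ->; rewrite ltnn.
Qed.

Lemma menII_typeII_cycle u : u \in menII ->
  is_cycle_comp M1' M2 (inl u) && typeII prefM prefW M1' M2 (inl u).
Proof.
have mM1' := stM1'.1.1; have mM2 := stM2.1.1.
move=> uII; have ux : typeII_vertex (inl u) := uII.
rewrite /is_cycle_comp /typeII; apply/and3P; split; apply/forallP => y; apply/implyP => uy.
- by rewrite degree_typeII // (connect_typeII uy ux).
- have /menIIP[w1 [w2 [yw1 yw2 lt]]] := connect_typeII uy ux.
  apply/forallP => a; apply/forallP => b; apply/implyP => /andP[ya yb].
  by rewrite /mprefers (mM1'.1 _ _ _ ya yw1) (mM2.1 _ _ _ yb yw2).
- have /womenIIP[u1 [u2 [u1y u2y lt]]] := connect_typeII uy ux.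
  apply/forallP => a; apply/forallP => b; apply/implyP => /andP[ay by_].
  by rewrite /wprefers (mM1'.2 _ _ _ ay u1y) (mM2.2 _ _ _ by_ u2y).
Qed.

(* Otherwise the edge would be shared with M2 or lie on a Type II cycle. *)
Lemma M2'_complement_prefers_M2 u w : (forall v, exists w2, (v, w2) \in M2) ->
  (u, w) \in M1' :\: M2' prefM prefW M1' M2 ->
  exists2 w2, (u, w2) \in M2 & prefM u w2 < prefM u w.
Proof.
move=> M2_perfect /setDP[uw uwM2']; have [w2 uw2] := M2_perfect u.
have nuw : (u, w) \notin M2.
  by apply: contra uwM2' => uwM2; rewrite inE uw uwM2.
exists w2 => //; case: (ltngtP (prefM u w2) (prefM u w)) => // [lt|eq_pref].
  have uII : u \in menII by apply/menIIP; exists w, w2.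
  have /andP[cyc II] := menII_typeII_cycle uII.
  by move: uwM2'; rewrite !inE uw nuw cyc II !orbT.
by move: nuw; rewrite -(strict.1 u _ _ eq_pref) uw2.
Qed.

End TypeII.
End Stability.

Theorem lemma3 (Man Woman : finType)
  (prefM : Man -> Woman -> nat) (prefW : Woman -> Man -> nat)
  (W1 : {set Woman}) (M1 M1' M2 : {set Man * Woman}) :
  strict_prefs prefM prefW ->
  #|Woman| = #|Man| ->
  stable_of prefM prefW W1 M1 ->
  stable_of prefM prefW W1 M1' ->
  men_dominates prefM M1' M1 ->
  stable_of prefM prefW [set: Woman] M2 ->
  #|M1' :\: M2' prefM prefW M1' M2| <= #|M1 :\: M2|.
Proof.
move=> strict card_eq stM1 stM1' dom stM2.
have M2_perfect := stable_perfect card_eq stM2.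
rewrite -(card_matching_fst stM1'.1.1 (subsetDl _ _)).
apply: leq_trans (leq_imset_card fst _); apply/subset_leq_card/subsetP.
move=> _ /imsetP[[u w] uwA ->] /=.
have [w2 uw2 lt2] := M2'_complement_prefers_M2 strict stM1' stM2 M2_perfect uwA.
have uw : (u, w) \in M1' by case/setDP: uwA.
have [w0 uw0] := men_dominates_matched strict stM1 stM1' dom uw.
have [w' uw' le] := dom u w0 uw0; rewrite (stM1'.1.1.1 _ _ _ uw' uw) in le.
apply/imsetP; exists (u, w0) => //; rewrite inE uw0 andbT.
by apply: contraTN lt2 => uw0M2; rewrite -leqNgt -(stM2.1.1.1 _ _ _ uw0M2 uw2).
Qed.
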